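(* Let $q$ be a prime and $b,c$ positive integers, and set $b'=b/\gcd(b,c)$, $c'=c/\gcd(b,c)$. (1) The parameters $(b,c;q)$ are admissible if and only if $b'+c'=q^k$ for some positive integer $k$. (2) If $b'+c'=q^k$ for a positive integer $k$, then the threshold $n_0=n_0(b,c;q)$ satisfies $\max\{\frac{b}{q-1},\frac{b+c}{q}+k-1\}\le n_0\le\frac{b+c-\gcd(b,c)}{q-1}$.
   Context: The Hamming graph $H(n,q)$ has vertex set $\mathbb{Z}_q^n$, two vertices adjacent iff they differ in exactly one coordinate. A $(b,c)$-coloring of $H(n,q)$ is a surjective map onto $\{1,2\}$ in which each color-1 vertex has exactly $b$ neighbours of color 2 and each color-2 vertex has exactly $c$ neighbours of color 1. The parameters $(b,c;q)$ are admissible if a $(b,c)$-coloring of $H(n,q)$ exists for some $n$; in that case such colorings exist exactly for $n\ge n_0$ for some integer $n_0=n_0(b,c;q)$, called the threshold. *)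

From mathcomp Require Import all_boot.
Set Implicit Arguments. Unset Strict Implicit. Unset Printing Implicit Defensive.

Definition hvert (n q : nat) := {ffun 'I_n -> 'I_q}.

Definition hadj (n q : nat) (x y : hvert n q) : bool :=
  #|[set i : 'I_n | x i != y i]| == 1.

(* A 2-coloring: true = colour 1, false = colour 2. *)
Arguments hadj : clear implicits.
Definition is_bc_coloring (n q b c : nat) (f : hvert n q -> bool) : Prop :=
  [/\ (exists x, f x), (exists y, ~~ f y),
      (forall x, f x -> #|[set y | hadj n q x y & ~~ f y]| = b) &
      (forall x, ~~ f x -> #|[set y | hadj n q x y & f y]| = c)].

Definition has_bc_coloring (n q b c : nat) : Prop :=
  exists f : hvert n q -> bool, @is_bc_coloring n q b c f.

Definition admissible (b c q : nat) : Prop := exists n, has_bc_coloring n q b c.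

Definition is_threshold (b c q n0 : nat) : Prop :=
  has_bc_coloring n0 q b c /\ (forall n, has_bc_coloring n q b c -> n0 <= n).

(* Write L_i for the operator summing a function over the line through a vertex in
   direction i.  Each L_i is q times an orthogonal projection, hence positive
   semidefinite, and the L_i commute.  For a (b,c)-coloring f of H(n,q) the function
   (b+c)[f = 1] - c is an eigenvector of sum_i L_i with eigenvalue nq - (b+c).
   Summing it over a face spanned by a set s of coordinates gives an eigenvector of
   the sum of the remaining L_i with eigenvalue q(n-|s|) - (b+c); when that is
   negative, positive semidefiniteness forces the face sum to vanish, i.e. the face
   contains exactly c q^|s| / (b+c) vertices of color 1.  So (b'+c') divides q^|s|:
   with s all coordinates this makes b'+c' a power q^k, and with |s| = k-1 it yields
   the lower bound b + c + q(k-1) <= q n.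
   Conversely, if b'+c' = q^k, take as parity-check matrix over F_q the
   (q^k-1)/(q-1) projective points of F_q^k, each repeated gcd(b,c) times, and color
   a word 1 when its syndrome lies in a fixed set of c' syndromes: flipping one
   coordinate moves the syndrome by a nonzero multiple of a column, and every nonzero
   syndrome is reached this way exactly gcd(b,c) times. *)

From mathcomp Require Import all_boot all_order all_algebra ring lra zify.
Set Implicit Arguments. Unset Strict Implicit. Unset Printing Implicit Defensive.
Import Order.TTheory GRing.Theory Num.Theory.

Section HammingGraph.
Variables n q : nat.
Local Notation V := (hvert n q).

Definition upd (x : V) (i : 'I_n) (v : 'I_q) : V :=
  [ffun j => if j == i then v else x j].

Lemma upd_at x i v : upd x i v i = v.
Proof. by rewrite ffunE eqxx. Qed.

Lemma upd_id x i : upd x i (x i) = x.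
Proof. by apply/ffunP=> j; rewrite ffunE; case: eqP => // ->. Qed.

Lemma upd_upd x i u v : upd (upd x i u) i v = upd x i v.
Proof. by apply/ffunP=> j; rewrite !ffunE; case: eqP. Qed.

Lemma upd_comm x i j u v : i != j ->
  upd (upd x i u) j v = upd (upd x j v) i u.
Proof.
move=> ij; apply/ffunP=> k; rewrite !ffunE.
by case: (eqVneq k j) => [->|//]; rewrite eq_sym (negPf ij).
Qed.

Lemma diff_set1_upd (x y : V) i v :
  (y i == v) && ([set j | x j != y j] == [set i]) =
  (y == upd x i v) && (v != x i).
Proof.
apply/idP/idP.
- case/andP=> /eqP yi /eqP D.
  have : i \in [set j | x j != y j] by rewrite D set11.
  rewrite inE -yi eq_sym => -> /=; rewrite andbT.
  apply/eqP/ffunP=> j; rewrite ffunE; case: (eqVneq j i) => [->//|ji].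
  apply/eqP; apply: contraR ji => hj.
  have : j \in [set j | x j != y j] by rewrite inE eq_sym.
  by rewrite D inE.
- case/andP=> /eqP -> vx; rewrite upd_at eqxx /=.
  apply/eqP/setP=> j; rewrite !inE ffunE.
  by case: (eqVneq j i) => [->|_]; rewrite ?eqxx // eq_sym.
Qed.

Lemma card_adj (P : pred V) x :
  #|[set y | hadj n q x y & P y]| =
  \sum_(i < n) \sum_(v | v != x i) P (upd x i v).
Proof.
rewrite -sum1_card big_mkcond /=.
have E y : (if y \in [set y | hadj n q x y & P y] then 1 else 0) =
    \sum_(i < n) (([set j | x j != y j] == [set i]) * P y).
  rewrite inE /hadj -big_distrl /=.
  case: (P y); rewrite ?andbF ?muln0 ?muln1 ?andbT //.
  case: cards1P => [[i0 ->]|Hn].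
    rewrite (bigD1 i0) //= eqxx big1 // => i /negPf ni.
    by apply/eqP; rewrite eqb0; apply/eqP=> /set1_inj /eqP; rewrite eq_sym ni.
  by rewrite big1 // => i _; apply/eqP; rewrite eqb0; apply/eqP=> Hi; apply: Hn; exists i.
rewrite (eq_bigr _ (fun y _ => E y)) exchange_big /=; apply: eq_bigr => i _.
rewrite (partition_big (fun y : V => y i) predT) //= [RHS]big_mkcond.
apply: eq_bigr => v _; rewrite big_mkcond /=.
rewrite (eq_bigr (fun y => ((y == upd x i v) && (v != x i)) * P y)); last first.
  by move=> y _; rewrite -diff_set1_upd; case: (y i == v).
case: (v != x i) => /=; last by rewrite big1 // => y _; rewrite andbF.
by rewrite (bigD1 (upd x i v)) //= eqxx big1 ?addn0 ?mul1n // => y /negPf ->.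
Qed.

Lemma card_adj_leq (P : pred V) x : #|[set y | hadj n q x y & P y]| <= n * (q - 1).
Proof.
rewrite card_adj -[n in n * _]card_ord -sum_nat_const; apply: leq_sum => i _.
have -> : q - 1 = \sum_(v | v != x i) 1.
  by rewrite sum1_card cardC1 card_ord subn1.
by apply: leq_sum => v _; rewrite leq_b1.
Qed.

End HammingGraph.

Section LineSums.
Variables (n q : nat).
Local Open Scope ring_scope.
Local Notation V := (hvert n q).

Section Additive.
Variable R : nmodType.

Definition line_sum (i : 'I_n) (h : V -> R) (x : V) : R := \sum_(v < q) h (upd x i v).

(* For [uniq s], [face_sum s h x] sums [h] over the face through [x] in which the
   coordinates in [s] vary. *)
Definition face_sum (s : seq 'I_n) (h : V -> R) : V -> R := foldr line_sum h s.

Lemma eq_line_sum i (h1 h2 : V -> R) : h1 =1 h2 -> line_sum i h1 =1 line_sum i h2.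
Proof. by move=> E x; apply: eq_bigr => v _. Qed.

Lemma eq_face_sum s (h1 h2 : V -> R) : h1 =1 h2 -> face_sum s h1 =1 face_sum s h2.
Proof. by elim: s => [|i s IH] E x //=; apply/eq_line_sum/IH. Qed.

Lemma face_sum_big s (I : finType) (H : I -> V -> R) x :
  face_sum s (fun y => \sum_(j : I) H j y) x = \sum_(j : I) face_sum s (H j) x.
Proof.
elim: s x => [|i s IH] x //=.
by rewrite /line_sum -exchange_big; apply: eq_bigr => v _; rewrite IH.
Qed.

Lemma line_sumD i (h1 h2 : V -> R) x :
  line_sum i (fun y => h1 y + h2 y) x = line_sum i h1 x + line_sum i h2 x.
Proof. exact: big_split. Qed.

Lemma line_sum_const i (a : R) x : line_sum i (fun=> a) x = a *+ q.
Proof. by rewrite /line_sum sumr_const card_ord. Qed.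

Lemma face_sumD s (h1 h2 : V -> R) x :
  face_sum s (fun y => h1 y + h2 y) x = face_sum s h1 x + face_sum s h2 x.
Proof.
elim: s x => [|i s IH] x //=.
by rewrite -line_sumD; apply: eq_line_sum.
Qed.

Lemma line_sum_upd i (h : V -> R) x u : line_sum i h (upd x i u) = line_sum i h x.
Proof. by apply: eq_bigr => v _; rewrite upd_upd. Qed.

Lemma line_sumC i j (h : V -> R) x : line_sum i (line_sum j h) x = line_sum j (line_sum i h) x.
Proof.
have [->//|ij] := eqVneq i j.
rewrite /line_sum exchange_big; apply: eq_bigr => v _; apply: eq_bigr => u _.
by rewrite upd_comm.
Qed.

Lemma line_sum_id i (h : V -> R) x : line_sum i (line_sum i h) x = line_sum i h x *+ q.
Proof.
rewrite {1}/line_sum (eq_bigr (fun _ => line_sum i h x)) => [|u _]; last exact: line_sum_upd.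
by rewrite sumr_const card_ord.
Qed.

Lemma line_sum_faceC i s (h : V -> R) x : line_sum i (face_sum s h) x = face_sum s (line_sum i h) x.
Proof.
elim: s x => [|j s IH] x //=.
by rewrite line_sumC; apply/eq_line_sum/IH.
Qed.

Lemma line_sum_face_mem i s (h : V -> R) x :
  i \in s -> line_sum i (face_sum s h) x = face_sum s h x *+ q.
Proof.
elim: s x => [|j s IH] x //=; rewrite in_cons.
have [->|ij] /= := eqVneq i j; first by rewrite line_sum_id.
move=> /IH {}IH; rewrite line_sumC (eq_line_sum _ IH).
by rewrite /line_sum -sumrMnl.
Qed.

Lemma face_sum_const s (a : R) x : face_sum s (fun=> a) x = a *+ q ^ size s.
Proof.
elim: s x => [|j s IH] x /=; first by rewrite expn0 mulr1n.
by rewrite (eq_line_sum _ IH) line_sum_const -mulrnA expnS mulnC.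
Qed.

Lemma sum_line_sum i (h : V -> R) : \sum_x line_sum i h x = (\sum_x h x) *+ q.
Proof.
rewrite /line_sum pair_big /=.
pose swap (p : V * 'I_q) := (upd p.1 i p.2, p.1 i).
have swapK : involutive swap by case=> y w; rewrite /swap /= upd_upd upd_at upd_id.
rewrite (reindex_inj (inv_inj swapK)) /=.
under eq_bigr do rewrite upd_upd upd_id.
rewrite -(pair_big predT predT (fun y _ => h y)) /= -sumrMnl.
by apply: eq_bigr => y _; rewrite sumr_const card_ord.
Qed.

End Additive.

Section SemiRing.
Variable R : pzSemiRingType.

Lemma line_sumMl i (a : R) (h : V -> R) x :
  line_sum i (fun y => a * h y) x = a * line_sum i h x.
Proof. by rewrite /line_sum mulr_sumr. Qed.

Lemma face_sumMl s (a : R) (h : V -> R) x :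
  face_sum s (fun y => a * h y) x = a * face_sum s h x.
Proof.
elim: s x => [|j s IH] x //=.
by rewrite -line_sumMl; apply: eq_line_sum.
Qed.

Lemma face_sum_natr s (h : V -> nat) x :
  face_sum s (fun y => (h y)%:R : R) x = (face_sum s h x)%:R.
Proof.
elim: s x => [|j s IH] x //=.
by rewrite /line_sum natr_sum; apply: eq_bigr => v _; exact: IH.
Qed.

Lemma sum_line_sums_indicator (P : pred V) x :
  \sum_(i < n) line_sum i (fun y => (P y)%:R : R) x =
  (n * P x + #|[set y | hadj n q x y & P y]|)%N%:R.
Proof.
have -> : (n * P x = \sum_(i < n) P x)%N by rewrite sum_nat_const card_ord.
rewrite card_adj natrD !natr_sum -big_split /=.
apply: eq_bigr => i _.
by rewrite /line_sum (bigD1 (x i)) //= upd_id natr_sum.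
Qed.

End SemiRing.

Lemma face_sum_eigen (R : pzRingType) (h : V -> R) (lam : R) s :
  uniq s -> (forall y, \sum_(i < n) line_sum i h y = lam * h y) ->
  forall y, \sum_(i < n | i \notin s) line_sum i (face_sum s h) y =
            (lam - (q * size s)%N%:R) * face_sum s h y.
Proof.
move=> us eig y.
have all_lines : \sum_(i < n) line_sum i (face_sum s h) y = lam * face_sum s h y.
  under eq_bigr do rewrite line_sum_faceC.
  rewrite -face_sum_big -face_sumMl.
  by apply: eq_face_sum => z; rewrite -eig.
have in_s : \sum_(i < n | i \in s) line_sum i (face_sum s h) y = (q * size s)%N%:R * face_sum s h y.
  rewrite (eq_bigr _ (fun i => line_sum_face_mem h y)) sumr_const.
  have -> : #|[pred i | i \in s]| = size s.
    by rewrite -(card_uniqP us); apply: eq_card.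
  by rewrite -mulrnA mulr_natl.
move: all_lines; rewrite (bigID (mem s)) /= in_s mulrBl => <-.
by rewrite addrC addrK.
Qed.

(* [line_sum i] is [q] times an orthogonal projection: [q <h, L h> = <L h, L h>]. *)
Lemma line_sum_form_ge0 (R : realDomainType) i (h : V -> R) : 0 <= \sum_x h x * line_sum i h x.
Proof.
have [q0|qpos] := posnP q.
  by rewrite big1 // => x _; rewrite /line_sum big_pred0 ?mulr0 // => -[v]; rewrite q0.
have sq : (\sum_x h x * line_sum i h x) *+ q = \sum_x line_sum i h x ^+ 2.
  rewrite -(sum_line_sum i); apply: eq_bigr => x _.
  rewrite /line_sum expr2 mulr_suml; apply: eq_bigr => u _.
  by under eq_bigr do rewrite upd_upd.
rewrite -(pmulrn_lge0 _ qpos) sq.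
by apply: sumr_ge0 => x _; apply: sqr_ge0.
Qed.

Lemma line_sums_neg_eigen_eq0 (R : realDomainType) (A : pred 'I_n) (h : V -> R) (lam : R) :
  lam < 0 -> (forall y, \sum_(i < n | A i) line_sum i h y = lam * h y) -> forall y, h y = 0.
Proof.
move=> lam_neg eig.
have psd : 0 <= lam * \sum_y h y ^+ 2.
  rewrite mulr_sumr (eq_bigr (fun y => \sum_(i < n | A i) h y * line_sum i h y)).
    by rewrite exchange_big sumr_ge0 // => i _; apply: line_sum_form_ge0.
  by move=> y _; rewrite -mulr_sumr eig expr2 mulrCA.
have sq0 : \sum_y h y ^+ 2 = 0.
  apply/eqP; rewrite eq_le sumr_ge0 ?andbT => [|y _]; last exact: sqr_ge0.
  by rewrite -(nmulr_rge0 _ lam_neg).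
move=> y; apply/eqP; rewrite -sqrf_eq0; apply/eqP.
by apply: (psumr_eq0P _ sq0) => // z _; apply: sqr_ge0.
Qed.

End LineSums.

Section Coloring.
Variables n q b c : nat.
Local Notation V := (hvert n q).
Variable f : V -> bool.
Hypothesis col : is_bc_coloring b c f.
Local Open Scope ring_scope.

Lemma sum_line_sums_color y :
  \sum_(i < n) line_sum i (fun z => (f z)%:R : rat) y =
  if f y then (n * q)%N%:R - b%:R else c%:R.
Proof.
case: col => _ _ adj_b adj_c.
have [fy|nfy] := boolP (f y); last first.
  by rewrite sum_line_sums_indicator (negPf nfy) /= muln0 adj_c.
have total : \sum_(i < n) line_sum i (fun z => (f z)%:R + (~~ f z)%:R) y = (n * q)%N%:R :> rat.
  rewrite (eq_bigr (fun _ => q%:R)) => [|i _]; first by rewrite sumr_const card_ord natrM mulr_natl.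
  by rewrite (eq_line_sum _ (h2 := fun=> 1)) ?line_sum_const // => z; case: (f z).
move: total; under eq_bigr do rewrite line_sumD.
rewrite big_split /= (sum_line_sums_indicator _ (fun z => ~~ f z)) fy /= muln0 adj_b // => <-.
by rewrite addrK.
Qed.

Definition balance (y : V) : rat := (b + c)%N%:R * (f y)%:R + - c%:R.

Lemma balance_eigen y :
  \sum_(i < n) line_sum i balance y = ((n * q)%N%:R - (b + c)%N%:R) * balance y.
Proof.
under eq_bigr do rewrite line_sumD line_sumMl line_sum_const.
rewrite big_split /= -mulr_sumr sum_line_sums_color sumr_const card_ord /balance.
rewrite -mulrnA -[_ *+ (q * n)]mulr_natr !natrM !natrD.
by case: (f y) => /=; ring.
Qed.

Lemma face_color_count (s : seq 'I_n) x : uniq s -> (q * (n - size s) < b + c)%N ->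
  ((b + c) * face_sum s (fun y => nat_of_bool (f y)) x = c * q ^ size s)%N.
Proof.
move=> us small_face.
have sn : (size s <= n)%N by rewrite -(card_uniqP us) -[X in (_ <= X)%N]card_ord max_card.
have eigen_lt0 : (n * q)%N%:R - (b + c)%N%:R - (q * size s)%N%:R < 0 :> rat.
  have : (n * q - q * size s < b + c)%N by rewrite mulnC -mulnBr.
  rewrite -(ltr_nat rat) natrB => [lt|]; first lra.
  by rewrite mulnC leq_mul2r sn orbT.
have face_eigen := face_sum_eigen us balance_eigen.
have /eqP := line_sums_neg_eigen_eq0 (A := fun i => i \notin s) eigen_lt0 face_eigen x.
rewrite face_sumD face_sumMl face_sum_const face_sum_natr.
by rewrite mulNrn addr_eq0 opprK -natrM -mulrnA eqr_nat => /eqP.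
Qed.

End Coloring.

Section ProjectivePoints.
Variables (F : finFieldType) (W : finLmodType F).
Local Open Scope ring_scope.

Definition nz_multiples (w : W) : {set W} := [set a *: w | a in [set a : F | a != 0]].

Definition proj_rep (w : W) : W := odflt w [pick u in nz_multiples w].

Definition proj_points : {set W} := [set proj_rep w | w in [set w : W | w != 0]].

Lemma nz_multiplesZ a w : a != 0 -> nz_multiples (a *: w) = nz_multiples w.
Proof.
move=> a0; apply/setP=> u; apply/imsetP/imsetP => [[d]|[d]]; rewrite inE => d0 ->.
  by exists (d * a); rewrite ?inE ?mulf_neq0 ?scalerA.
by exists (d / a); rewrite ?inE ?mulf_neq0 ?invr_eq0 ?scalerA ?divfK.
Qed.

Lemma nz_multiples_self w : w \in nz_multiples w.
Proof. by apply/imsetP; exists 1; rewrite ?inE ?oner_neq0 ?scale1r. Qed.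

Lemma proj_repP w : exists2 a : F, a != 0 & proj_rep w = a *: w.
Proof.
have : proj_rep w \in nz_multiples w.
  by rewrite /proj_rep; case: pickP => [u -> //|/(_ w)]; rewrite nz_multiples_self.
by case/imsetP=> a; rewrite inE => a0 ->; exists a.
Qed.

Lemma proj_repZ a w : a != 0 -> proj_rep (a *: w) = proj_rep w.
Proof.
move=> a0; rewrite /proj_rep nz_multiplesZ //.
by case: pickP => [//|/(_ w)]; rewrite nz_multiples_self.
Qed.

Lemma proj_rep_id w : proj_rep (proj_rep w) = proj_rep w.
Proof. by have [a a0 E] := proj_repP w; rewrite {1}E proj_repZ. Qed.

Lemma proj_points_neq0 p : p \in proj_points -> p != 0.
Proof.
case/imsetP=> w; rewrite inE => w0 ->; have [a a0 ->] := proj_repP w.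
by rewrite scaler_eq0 negb_or a0.
Qed.

Lemma proj_points_rep p : p \in proj_points -> proj_rep p = p.
Proof. by case/imsetP=> w _ ->; exact: proj_rep_id. Qed.

(* Every nonzero vector is [a *: p] for exactly one point [p] and one [a != 0]. *)
Lemma sum_nz_vectors (R : nmodType) (G : W -> R) :
  \sum_(w | w != 0) G w = \sum_(p in proj_points) \sum_(a : F | a != 0) G (a *: p).
Proof.
rewrite (partition_big proj_rep (mem proj_points)) => [|w w0]; last by apply/imsetP; exists w; rewrite ?inE.
apply: eq_bigr => p Pp; have p0 := proj_points_neq0 Pp.
pose coef (w : W) : F := odflt 0 [pick a | w == a *: p].
rewrite (reindex_onto (fun a => a *: p) coef) => [|w /andP[w0 /eqP rw]]; last first.
  have [a a0 E] := proj_repP w.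
  have -> : w = a^-1 *: p by rewrite -rw E scalerA mulVf // scale1r.
  by rewrite /coef; case: pickP => [d /eqP -> //|/(_ a^-1)]; rewrite eqxx.
apply: eq_bigl => a; have [->|a0] := eqVneq a 0; first by rewrite scale0r eqxx.
rewrite scaler_eq0 (negPf a0) (negPf p0) /= proj_repZ // proj_points_rep // eqxx /=.
rewrite /coef; case: pickP => [d /eqP|/(_ a)]; last by rewrite eqxx.
move/eqP; rewrite -subr_eq0 -scalerBl scaler_eq0 (negPf p0) orbF subr_eq0 eq_sym.
by move=> ->.
Qed.

Lemma card_proj_points : (#|proj_points| * #|F|.-1 = #|W|.-1)%N.
Proof.
have sum1 (T : finType) (x : T) : (\sum_(a : T | a != x) 1 = #|T|.-1)%N.
  by rewrite -(cardC1 x) -sum1_card; apply: eq_bigl => a; rewrite inE.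
have := sum_nz_vectors (fun _ => 1%N).
by rewrite sum1 (eq_bigr (fun _ => #|F|.-1)) => [|p _]; rewrite ?sum1 // sum_nat_const => ->.
Qed.

End ProjectivePoints.

Lemma sum_mod_period (H : nat -> nat) m g :
  \sum_(0 <= i < g * m) H (i %% m) = g * \sum_(0 <= j < m) H j.
Proof.
elim: g => [|g IH]; first by rewrite !mul0n big_geq.
rewrite mulSn addnC (big_cat_nat (n := g * m)) ?leq_addr //= IH.
rewrite -{1}[g * m]add0n big_addn addKn mulSn addnC; congr (_ + _).
rewrite !big_nat; apply: eq_bigr => i /andP[_ im].
by rewrite addnC modnMDl modn_small.
Qed.

Lemma sum_translate_card (Z : finZmodType) (s : Z) (Q : pred Z) :
  \sum_w Q (s + w)%R = #|Q|.
Proof.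
rewrite (reindex_inj (addrI (- s)%R)) /=.
under eq_bigr do rewrite addrA subrr add0r.
by rewrite -sum1_card [RHS]big_mkcond.
Qed.

Section SyndromeColoring.
Variables (q k g c : nat).
Hypothesis q_prime : prime q.
Hypothesis c_le : c <= q ^ k.
Local Notation W := 'rV['F_q]_k.
Local Notation P := (proj_points W).

Definition columns := g * #|P|.

Definition column (i : 'I_columns) : W := nth 0%R (enum P) (i %% #|P|).

Lemma sum_columns (G : W -> nat) : \sum_(i < columns) G (column i) = g * \sum_(p in P) G p.
Proof.
have := sum_mod_period (fun j => G (nth 0%R (enum P) j)) #|P| g.
by rewrite big_mkord /= => ->; rewrite -big_enum [X in _ = _ * X](big_nth 0%R) -cardE.
Qed.

Definition to_Fp (u : 'I_q) : 'F_q := cast_ord (esym (Fp_cast q_prime)) u.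

Lemma to_Fp_bij : bijective to_Fp.
Proof. by exists (cast_ord (Fp_cast q_prime)); [apply: cast_ordKV | apply: cast_ordK]. Qed.

Definition syndrome (x : hvert columns q) : W := (\sum_(i < columns) to_Fp (x i) *: column i)%R.

Lemma syndrome_upd x i v :
  syndrome (upd x i v) = (syndrome x + (to_Fp v - to_Fp (x i)) *: column i)%R.
Proof.
rewrite /syndrome (bigD1 i) //= [in RHS](bigD1 i) //= upd_at.
rewrite (eq_bigr (fun j => to_Fp (x j) *: column j)%R) => [|j /negPf ji]; last by rewrite ffunE ji.
by rewrite scalerBl [RHS]addrC !addrA subrK.
Qed.

Lemma sum_nz_shifts (G : 'F_q -> nat) (u : 'I_q) :
  \sum_(v | v != u) G (to_Fp v - to_Fp u)%R = \sum_(a | a != 0%R) G a.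
Proof.
have [from_Fp toK fromK] := to_Fp_bij.
rewrite (reindex (fun a => from_Fp (a + to_Fp u)%R)); last first.
  by exists (fun v => to_Fp v - to_Fp u)%R => [a _|v _]; rewrite ?fromK ?addrK // subrK toK.
apply: eq_big => [a|a _]; last by rewrite fromK addrK.
by rewrite -(inj_eq (can_inj toK)) fromK -subr_eq0 addrK.
Qed.

Lemma card_adj_syndrome x (Q : pred W) :
  #|[set y | hadj columns q x y & Q (syndrome y)]| =
  g * \sum_(w | w != 0%R) Q (syndrome x + w)%R.
Proof.
rewrite card_adj (eq_bigr (fun i => \sum_(a | a != 0%R) Q (syndrome x + a *: column i)%R)).
  by rewrite (sum_columns (fun p => \sum_(a | a != 0%R) Q (syndrome x + a *: p)%R)) sum_nz_vectors.
move=> i _; rewrite -(sum_nz_shifts (fun a => Q (syndrome x + a *: column i)%R) (x i)).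
by apply: eq_bigr => v _; rewrite syndrome_upd.
Qed.

Lemma card_rV_Fp : #|W| = q ^ k.
Proof. by rewrite card_mx card_Fp // mul1n. Qed.

Lemma c_le_card_rV : c <= #|W|. Proof. by rewrite card_rV_Fp. Qed.

Definition color_set : {set W} := [set enum_val (widen_ord c_le_card_rV i) | i : 'I_c].

Lemma card_color_set : #|color_set| = c.
Proof. by rewrite card_imset ?card_ord // => i j /enum_val_inj /(congr1 val) /= /val_inj. Qed.

Lemma card_adj_syndrome_in x (S : {set W}) :
  #|[set y | hadj columns q x y & syndrome y \in S]| = g * (#|S| - (syndrome x \in S)).
Proof.
rewrite (card_adj_syndrome x (mem S)); congr (_ * _).
have := sum_translate_card (syndrome x) (mem S).
by rewrite (bigD1 0%R) //= addr0 => <-; rewrite addKn.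
Qed.

Definition syndrome_coloring (x : hvert columns q) : bool := syndrome x \in color_set.

Lemma syndrome_coloring_bc : 0 < g -> 0 < c -> c < q ^ k ->
  is_bc_coloring (g * (q ^ k - c)) (g * c) syndrome_coloring.
Proof.
move=> g_gt0 c_gt0 c_lt.
have adj_b x : syndrome_coloring x ->
    #|[set y | hadj columns q x y & ~~ syndrome_coloring y]| = g * (q ^ k - c).
  move=> fx; have := card_adj_syndrome_in x (~: color_set).
  rewrite inE [_ \in color_set]fx subn0 -(addKn #|color_set| #|~: _|).
  rewrite cardsC card_rV_Fp card_color_set => <-.
  by apply: eq_card => y; rewrite !inE.
have adj_c x : ~~ syndrome_coloring x ->
    #|[set y | hadj columns q x y & syndrome_coloring y]| = g * c.
  by move=> /negbTE fx; rewrite card_adj_syndrome_in [_ \in color_set]fx subn0 card_color_set.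
have other x : exists y, syndrome_coloring y = ~~ syndrome_coloring x.
  case fx: (syndrome_coloring x).
    have : 0 < #|[set y | hadj columns q x y & ~~ syndrome_coloring y]|.
      by rewrite adj_b // muln_gt0 g_gt0 subn_gt0.
    by case/card_gt0P=> y; rewrite inE => /andP[_ /negbTE]; exists y.
  have : 0 < #|[set y | hadj columns q x y & syndrome_coloring y]|.
    by rewrite adj_c ?fx // muln_gt0 g_gt0.
  by case/card_gt0P=> y; rewrite inE => /andP[_ fy]; exists y; rewrite fy.
pose x0 : hvert columns q := [ffun=> Ordinal (prime_gt0 q_prime)].
have [y0 y0x0] := other x0.
split=> //; case fx0: (syndrome_coloring x0) y0x0 => /= fy0.
- by exists x0.
- by exists y0; rewrite fy0.
- by exists y0; rewrite fy0.
- by exists x0; rewrite fx0.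
Qed.

End SyndromeColoring.

Lemma coloring_degree_bound n q b c : has_bc_coloring n q b c -> b <= n * (q - 1).
Proof. by case=> f [[x fx] _ adj_b _]; rewrite -(adj_b x fx) card_adj_leq. Qed.

Lemma coloring_face_dvdn n q b c (s : seq 'I_n) :
  has_bc_coloring n q b c -> uniq s -> q * (n - size s) < b + c ->
  b + c %| c * q ^ size s.
Proof.
case=> f col us small_face; have [[x _] _ _ _] := col.
by rewrite -(face_color_count col x us small_face) dvdn_mulr.
Qed.

Section ReducedParameters.
Variables q b c : nat.
Hypotheses (q_prime : prime q) (b_gt0 : 0 < b) (c_gt0 : 0 < c).
Local Notation g := (gcdn b c).
Local Notation b' := (b %/ gcdn b c).
Local Notation c' := (c %/ gcdn b c).

Let g_gt0 : 0 < g. Proof. by rewrite gcdn_gt0 b_gt0. Qed.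
Let b_eq : b = b' * g. Proof. by rewrite divnK // dvdn_gcdl. Qed.
Let c_eq : c = c' * g. Proof. by rewrite divnK // dvdn_gcdr. Qed.

Let reduced_gt0 : 0 < b' /\ 0 < c'.
Proof.
rewrite !divn_gt0 ?g_gt0 //.
by rewrite (dvdn_leq b_gt0 (dvdn_gcdl b c)) (dvdn_leq c_gt0 (dvdn_gcdr b c)).
Qed.

Lemma reduced_dvdn m : b + c %| c * m -> b' + c' %| m.
Proof.
have cop : coprime (b' + c') c'.
  rewrite /coprime gcdnC addnC gcdnDl gcdnC -(eqn_pmul2r g_gt0) mul1n.
  by rewrite muln_gcdl -b_eq -c_eq.
have -> : b + c = (b' + c') * g by rewrite mulnDl -b_eq -c_eq.
by rewrite [c in c * m]c_eq mulnAC dvdn_pmul2r ?g_gt0 // Gauss_dvdr.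
Qed.

Lemma coloring_reduced_prime_power n :
  has_bc_coloring n q b c -> exists k, 0 < k /\ b' + c' = q ^ k.
Proof.
move=> col; have := coloring_face_dvdn col (enum_uniq 'I_n).
rewrite size_enum_ord subnn muln0 addn_gt0 b_gt0 => /(_ isT) /reduced_dvdn.
case/(dvdn_pfactor _ _ q_prime) => k _ Ek; exists k; split=> //.
have [b'_gt0 c'_gt0] := reduced_gt0.
have two_le : 1 < b' + c' by rewrite -addn1 leq_add.
by case: k Ek => // E; move: two_le; rewrite E expn0.
Qed.

Lemma coloring_length_lower_bound n k : 0 < k -> b' + c' = q ^ k ->
  has_bc_coloring n q b c -> b + c + q * (k - 1) <= q * n.
Proof.
move=> k_gt0 Ek col; rewrite leqNgt; apply/negP => long.
pose m := minn (k - 1) n; pose s := take m (enum 'I_n).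
have size_s : size s = m by rewrite size_take size_enum_ord; case: ltnP; rewrite /m; lia.
have small_face : q * (n - size s) < b + c.
  rewrite size_s /m; case: (leqP n (k - 1)) => n_le; first by rewrite subnn muln0 addn_gt0 b_gt0.
  by rewrite mulnBr; lia.
have := reduced_dvdn (coloring_face_dvdn col (take_uniq _ (enum_uniq _)) small_face).
by rewrite size_s Ek dvdn_Pexp2l ?prime_gt1 // /m; lia.
Qed.

Lemma prime_power_coloring k : 0 < k -> b' + c' = q ^ k ->
  exists2 n, n * (q - 1) = b + c - g & has_bc_coloring n q b c.
Proof.
move=> k_gt0 Ek; have [b'_gt0 c'_gt0] := reduced_gt0.
have c'_lt : c' < q ^ k by rewrite -Ek -addn1 addnC leq_add2r.
exists (columns q k g).
  have := @card_proj_points _ 'rV['F_q]_k.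
  rewrite card_Fp // card_mx card_Fp // mul1n !subn1 => card_P.
  have -> : b + c = (b' + c') * g by rewrite mulnDl -b_eq -c_eq.
  by rewrite /columns -mulnA card_P Ek -subn1 mulnBr muln1 mulnC.
have := syndrome_coloring_bc q_prime (ltnW c'_lt) g_gt0 c'_gt0 c'_lt.
have -> : g * (q ^ k - c') = b by rewrite -Ek addnK mulnC -b_eq.
rewrite mulnC -c_eq => col.
by exists (syndrome_coloring q_prime (ltnW c'_lt)).
Qed.

End ReducedParameters.

Theorem theorem10 (q b c : nat) (hq : prime q) (hb : 0 < b) (hc : 0 < c) :
  let g := gcdn b c in
  let b' := b %/ g in
  let c' := c %/ g in
  (admissible b c q <-> exists k, 0 < k /\ b' + c' = q ^ k) /\
  (forall k, 0 < k -> b' + c' = q ^ k ->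
     forall n0, is_threshold b c q n0 ->
       [/\ b <= n0 * (q - 1),
           b + c + q * (k - 1) <= q * n0 &
           n0 * (q - 1) <= b + c - g]).
Proof.
move=> g b' c'; split.
  split; first by case=> n /(coloring_reduced_prime_power hq hb hc).
  by case=> k [k_gt0 Ek]; have [n _ col] := prime_power_coloring hq hb hc k_gt0 Ek; exists n.
move=> k k_gt0 Ek n0 [col0 least]; split.
- exact: coloring_degree_bound col0.
- exact: (coloring_length_lower_bound hq hb hc k_gt0 Ek col0).
- have [n En col] := prime_power_coloring hq hb hc k_gt0 Ek.
  by rewrite -En leq_mul2r least ?orbT.
Qed.
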